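(* For terms $e, e_1, e_2$ of $\mathrm{F}_H$: if $e \longrightarrow e_1$ and $e \longrightarrow e_2$, then $e_1 = e_2$.
   Context: Syntax of the calculus $\mathrm{F}_H$. Fix a set of base types $B$ containing $\mathsf{Bool}$; each base type $B$ has a set $\mathcal{K}_B$ of constants (with $\mathcal{K}_{\mathsf{Bool}}=\{\mathsf{true},\mathsf{false}\}$); $k$ ranges over constants. Fix primitive operations $\mathtt{op}$, each with a denotation $[\![\mathtt{op}]\!]$, a partial function from tuples of constants to constants. Types: $T ::= B \mid \alpha \mid x{:}T_1\to T_2 \mid \forall\alpha.T \mid \{x{:}T \mid e\}$. Values: $v ::= k \mid \lambda x{:}T.e \mid \Lambda\alpha.e \mid \langle T_1\Rightarrow T_2\rangle^{\ell}$ ($\ell$ ranges over blame labels). Terms: $e ::= v \mid x \mid \mathtt{op}(e_1,\dots,e_n) \mid e_1\,e_2 \mid e\,T \mid \langle\!\langle \{x{:}T_1\mid e_1\}, e_2\rangle\!\rangle^{\ell} \mid \langle \{x{:}T_1\mid e_1\}, e_2, v\rangle^{\ell} \mid \Uparrow\ell$. Variables are not values. Substitution is capture-avoiding; $\mathsf{let}\ y{:}T = e_1\ \mathsf{in}\ e_2$ abbreviates $(\lambda y{:}T.e_2)\,e_1$. Reduction $\rightsquigarrow$: $\mathtt{op}(k_1,\dots,k_n)\rightsquigarrow[\![\mathtt{op}]\!](k_1,\dots,k_n)$; $(\lambda x{:}T.e)\,v\rightsquigarrow e[v/x]$; $(\Lambda\alpha.e)\,T\rightsquigarrow e[T/\alpha]$;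 $\langle B\Rightarrow B\rangle^\ell v\rightsquigarrow v$; $\langle x{:}T_{11}\to T_{12}\Rightarrow x{:}T_{21}\to T_{22}\rangle^\ell v\rightsquigarrow \lambda x{:}T_{21}.\,\mathsf{let}\ y{:}T_{11}=\langle T_{21}\Rightarrow T_{11}\rangle^\ell x\ \mathsf{in}\ \langle T_{12}[y/x]\Rightarrow T_{22}\rangle^\ell (v\,y)$ with $y$ fresh; $\langle\forall\alpha.T_1\Rightarrow\forall\alpha.T_2\rangle^\ell v\rightsquigarrow\Lambda\alpha.\langle T_1\Rightarrow T_2\rangle^\ell(v\,\alpha)$; $\langle\{x{:}T_1\mid e_1\}\Rightarrow T_2\rangle^\ell v\rightsquigarrow\langle T_1\Rightarrow T_2\rangle^\ell v$; $\langle T_1\Rightarrow\{x{:}T_2\mid e_2\}\rangle^\ell v\rightsquigarrow\langle\!\langle\{x{:}T_2\mid e_2\},\langle T_1\Rightarrow T_2\rangle^\ell v\rangle\!\rangle^\ell$ provided $T_1$ is not a refinement type; $\langle\!\langle\{x{:}T\mid e\},v\rangle\!\rangle^\ell\rightsquigarrow\langle\{x{:}T\mid e\},e[v/x],v\rangle^\ell$; $\langle\{x{:}T\mid e\},\mathsf{true},v\rangle^\ell\rightsquigarrow v$; $\langle\{x{:}T\mid e\},\mathsf{false},v\rangle^\ell\rightsquigarrow\Uparrow\ell$. Evaluation contexts: $E ::= [\,] \mid \mathtt{op}(v_1,\dots,v_n,E,e_1,\dots,e_m) \mid E\,e \mid v\,E \mid E\,T \mid \langle\!\langle\{x{:}T\mid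 e\},E\rangle\!\rangle^\ell \mid \langle\{x{:}T\mid e\},E,v\rangle^\ell$. Evaluation $\longrightarrow$: $E[e_1]\longrightarrow E[e_2]$ whenever $e_1\rightsquigarrow e_2$; $E[\Uparrow\ell]\longrightarrow\Uparrow\ell$ whenever $E\neq[\,]$. *)

(* Syntax and operational semantics of the calculus F_H,
   using de Bruijn indices (two independent index spaces: term variables
   and type variables), so that syntactic equality is alpha-equivalence. *)
From Stdlib Require Import List Arith.
Import ListNotations.
Set Implicit Arguments.

Record signature := {
  base : Type;
  tyBool : base;
  const : Type;
  const_ty : const -> base;
  ctrue : const;
  cfalse : const;
  ctrue_ty : const_ty ctrue = tyBool;
  cfalse_ty : const_ty cfalse = tyBool;
  ctrue_cfalse : ctrue <> cfalse;
  Bool_consts : forall k, const_ty k = tyBool -> k = ctrue \/ k = cfalse;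
  prim : Type;
  denote : prim -> list const -> option const;
  label : Type
}.

Section Syntax.
Variable Sg : signature.

(* Types  T ::= B | alpha | x:T1 -> T2 | forall alpha. T | {x:T | e}
   Terms  e ::= k | x | lambda x:T. e | Lambda alpha. e | <T1 => T2>^l
              | op(e1..en) | e1 e2 | e T | <<{x:T|e1}, e2>>^l
              | <{x:T|e1}, e2, v>^l | blame l
   Binders: TArr binds a term var in T2; TAll binds a type var;
   TRef binds a term var in e; tabs binds a term var in its body;
   ttabs binds a type var; tcheck/tactive bind a term var in the
   refinement predicate (second argument) only. *)
Inductive ty : Type :=
| TBase (b : base Sg)
| TVar (n : nat)
| TArr (T1 T2 : ty)
| TAll (T : ty)
| TRef (T : ty) (e : tm)
with tm : Type :=
| tconst (k : const Sg)
| tvar (n : nat)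
| tabs (T : ty) (e : tm)
| ttabs (e : tm)
| tcast (T1 T2 : ty) (l : label Sg)
| top (o : prim Sg) (es : list tm)
| tapp (e1 e2 : tm)
| ttapp (e : tm) (T : ty)
| tcheck (T : ty) (e1 : tm) (e2 : tm) (l : label Sg)
| tactive (T : ty) (e1 : tm) (e2 : tm) (v : tm) (l : label Sg)
| tblame (l : label Sg).

Definition value (t : tm) : Prop :=
  match t with
  | tconst _ | tabs _ _ | ttabs _ | tcast _ _ _ => True
  | _ => False
  end.

(* Conformance to the grammar: the third component of an active check is a value. *)
Fixpoint wf_ty (T : ty) : Prop :=
  match T with
  | TBase _ | TVar _ => True
  | TArr T1 T2 => wf_ty T1 /\ wf_ty T2
  | TAll T => wf_ty T
  | TRef T e => wf_ty T /\ wf_tm e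
  end
with wf_tm (t : tm) : Prop :=
  match t with
  | tconst _ | tvar _ | tblame _ => True
  | tabs T e => wf_ty T /\ wf_tm e
  | ttabs e => wf_tm e
  | tcast T1 T2 _ => wf_ty T1 /\ wf_ty T2
  | top _ es => (fix go (es : list tm) : Prop :=
                   match es with [] => True | e :: es' => wf_tm e /\ go es' end) es
  | tapp e1 e2 => wf_tm e1 /\ wf_tm e2
  | ttapp e T => wf_tm e /\ wf_ty T
  | tcheck T e1 e2 _ => wf_ty T /\ wf_tm e1 /\ wf_tm e2
  | tactive T e1 e2 v _ => wf_ty T /\ wf_tm e1 /\ wf_tm e2 /\ wf_tm v /\ value v
  end.

Fixpoint shty (c d : nat) (T : ty) : ty :=
  match T with
  | TBase b => TBase b
  | TVar n => TVar n
  | TArr T1 T2 => TArr (shty c d T1) (shty (S c) d T2)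
  | TAll T => TAll (shty c d T)
  | TRef T e => TRef (shty c d T) (shtm (S c) d e)
  end
with shtm (c d : nat) (t : tm) : tm :=
  match t with
  | tconst k => tconst k
  | tvar n => if n <? c then tvar n else tvar (n + d)
  | tabs T e => tabs (shty c d T) (shtm (S c) d e)
  | ttabs e => ttabs (shtm c d e)
  | tcast T1 T2 l => tcast (shty c d T1) (shty c d T2) l
  | top o es => top o (map (shtm c d) es)
  | tapp e1 e2 => tapp (shtm c d e1) (shtm c d e2)
  | ttapp e T => ttapp (shtm c d e) (shty c d T)
  | tcheck T e1 e2 l => tcheck (shty c d T) (shtm (S c) d e1) (shtm c d e2) l
  | tactive T e1 e2 v l =>
      tactive (shty c d T) (shtm (S c) d e1) (shtm c d e2) (shtm c d v) l
  | tblame l => tblame l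
  end.

Fixpoint tshty (c d : nat) (T : ty) : ty :=
  match T with
  | TBase b => TBase b
  | TVar n => if n <? c then TVar n else TVar (n + d)
  | TArr T1 T2 => TArr (tshty c d T1) (tshty c d T2)
  | TAll T => TAll (tshty (S c) d T)
  | TRef T e => TRef (tshty c d T) (tshtm c d e)
  end
with tshtm (c d : nat) (t : tm) : tm :=
  match t with
  | tconst k => tconst k
  | tvar n => tvar n
  | tabs T e => tabs (tshty c d T) (tshtm c d e)
  | ttabs e => ttabs (tshtm (S c) d e)
  | tcast T1 T2 l => tcast (tshty c d T1) (tshty c d T2) l
  | top o es => top o (map (tshtm c d) es)
  | tapp e1 e2 => tapp (tshtm c d e1) (tshtm c d e2)
  | ttapp e T => ttapp (tshtm c d e) (tshty c d T)
  | tcheck T e1 e2 l => tcheck (tshty c d T) (tshtm c d e1) (tshtm c d e2) l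
  | tactive T e1 e2 v l =>
      tactive (tshty c d T) (tshtm c d e1) (tshtm c d e2) (tshtm c d v) l
  | tblame l => tblame l
  end.

(* Capture-avoiding substitution of the term s for term variable j
   (variables above j are decremented, as j's binder is removed). *)
Fixpoint substty (j : nat) (s : tm) (T : ty) : ty :=
  match T with
  | TBase b => TBase b
  | TVar n => TVar n
  | TArr T1 T2 => TArr (substty j s T1) (substty (S j) (shtm 0 1 s) T2)
  | TAll T => TAll (substty j (tshtm 0 1 s) T)
  | TRef T e => TRef (substty j s T) (substtm (S j) (shtm 0 1 s) e)
  end
with substtm (j : nat) (s : tm) (t : tm) : tm :=
  match t with
  | tconst k => tconst k
  | tvar n => if n =? j then s else if j <? n then tvar (n - 1) else tvar n
  | tabs T e => tabs (substty j s T) (substtm (S j) (shtm 0 1 s) e)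
  | ttabs e => ttabs (substtm j (tshtm 0 1 s) e)
  | tcast T1 T2 l => tcast (substty j s T1) (substty j s T2) l
  | top o es => top o (map (substtm j s) es)
  | tapp e1 e2 => tapp (substtm j s e1) (substtm j s e2)
  | ttapp e T => ttapp (substtm j s e) (substty j s T)
  | tcheck T e1 e2 l =>
      tcheck (substty j s T) (substtm (S j) (shtm 0 1 s) e1) (substtm j s e2) l
  | tactive T e1 e2 v l =>
      tactive (substty j s T) (substtm (S j) (shtm 0 1 s) e1) (substtm j s e2)
              (substtm j s v) l
  | tblame l => tblame l
  end.

Fixpoint tsubstty (j : nat) (U : ty) (T : ty) : ty :=
  match T with
  | TBase b => TBase b
  | TVar n => if n =? j then U else if j <? n then TVar (n - 1) else TVar n
  | TArr T1 T2 => TArr (tsubstty j U T1) (tsubstty j (shty 0 1 U) T2)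
  | TAll T => TAll (tsubstty (S j) (tshty 0 1 U) T)
  | TRef T e => TRef (tsubstty j U T) (tsubsttm j (shty 0 1 U) e)
  end
with tsubsttm (j : nat) (U : ty) (t : tm) : tm :=
  match t with
  | tconst k => tconst k
  | tvar n => tvar n
  | tabs T e => tabs (tsubstty j U T) (tsubsttm j (shty 0 1 U) e)
  | ttabs e => ttabs (tsubsttm (S j) (tshty 0 1 U) e)
  | tcast T1 T2 l => tcast (tsubstty j U T1) (tsubstty j U T2) l
  | top o es => top o (map (tsubsttm j U) es)
  | tapp e1 e2 => tapp (tsubsttm j U e1) (tsubsttm j U e2)
  | ttapp e T => ttapp (tsubsttm j U e) (tsubstty j U T)
  | tcheck T e1 e2 l =>
      tcheck (tsubstty j U T) (tsubsttm j (shty 0 1 U) e1) (tsubsttm j U e2) l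
  | tactive T e1 e2 v l =>
      tactive (tsubstty j U T) (tsubsttm j (shty 0 1 U) e1) (tsubsttm j U e2)
              (tsubsttm j U v) l
  | tblame l => tblame l
  end.

Definition is_refinement (T : ty) : Prop :=
  match T with TRef _ _ => True | _ => False end.

(* The function-cast result
   lambda x:T21. let y:T11 = <T21 => T11>^l x in <T12[y/x] => T22>^l (v y),
   with let y:T = e1 in e2 := (lambda y:T. e2) e1. In de Bruijn form,
   inside the let body y = 0 and x = 1. *)
Definition fun_cast_result (T11 T12 T21 T22 : ty) (l : label Sg) (v : tm) : tm :=
  tabs T21
    (tapp
       (tabs (shty 0 1 T11)
          (tapp (tcast (shty 1 1 T12) (shty 0 1 T22) l)
                (tapp (shtm 0 2 v) (tvar 0))))
       (tapp (tcast (shty 0 1 T21) (shty 0 1 T11) l) (tvar 0))).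

Inductive red : tm -> tm -> Prop :=
| red_op : forall o ks k,
    denote Sg o ks = Some k -> red (top o (map tconst ks)) (tconst k)
| red_beta : forall T e v, value v -> red (tapp (tabs T e) v) (substtm 0 v e)
| red_tbeta : forall e T, red (ttapp (ttabs e) T) (tsubsttm 0 T e)
| red_cast_base : forall b l v, value v ->
    red (tapp (tcast (TBase b) (TBase b) l) v) v
| red_cast_fun : forall T11 T12 T21 T22 l v, value v ->
    red (tapp (tcast (TArr T11 T12) (TArr T21 T22) l) v)
        (fun_cast_result T11 T12 T21 T22 l v)
| red_cast_forall : forall T1 T2 l v, value v ->
    red (tapp (tcast (TAll T1) (TAll T2) l) v)
        (ttabs (tapp (tcast T1 T2 l) (ttapp (tshtm 0 1 v) (TVar 0))))
| red_cast_forget : forall T1 e1 T2 l v, value v ->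
    red (tapp (tcast (TRef T1 e1) T2 l) v) (tapp (tcast T1 T2 l) v)
| red_cast_precheck : forall T1 T2 e2 l v, value v -> ~ is_refinement T1 ->
    red (tapp (tcast T1 (TRef T2 e2) l) v)
        (tcheck T2 e2 (tapp (tcast T1 T2 l) v) l)
| red_check : forall T e v l, value v ->
    red (tcheck T e v l) (tactive T e (substtm 0 v e) v l)
| red_ok : forall T e v l, value v ->
    red (tactive T e (tconst (ctrue Sg)) v l) v
| red_fail : forall T e v l, value v ->
    red (tactive T e (tconst (cfalse Sg)) v l) (tblame l).

Inductive ectx : Type :=
| EHole
| EOp (o : prim Sg) (vs : list tm) (E : ectx) (es : list tm)
| EAppL (E : ectx) (e : tm)
| EAppR (v : tm) (E : ectx)
| ETApp (E : ectx) (T : ty)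
| ECheck (T : ty) (e : tm) (E : ectx) (l : label Sg)
| EActive (T : ty) (e : tm) (E : ectx) (v : tm) (l : label Sg).

Fixpoint ectx_ok (E : ectx) : Prop :=
  match E with
  | EHole => True
  | EOp _ vs E _ => Forall value vs /\ ectx_ok E
  | EAppL E _ => ectx_ok E
  | EAppR v E => value v /\ ectx_ok E
  | ETApp E _ => ectx_ok E
  | ECheck _ _ E _ => ectx_ok E
  | EActive _ _ E v _ => value v /\ ectx_ok E
  end.

Fixpoint plug (E : ectx) (t : tm) : tm :=
  match E with
  | EHole => t
  | EOp o vs E es => top o (vs ++ plug E t :: es)
  | EAppL E e => tapp (plug E t) e
  | EAppR v E => tapp v (plug E t)
  | ETApp E T => ttapp (plug E t) T
  | ECheck T e E l => tcheck T e (plug E t) l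
  | EActive T e E v l => tactive T e (plug E t) v l
  end.

Inductive step : tm -> tm -> Prop :=
| step_ctx : forall E e1 e2, ectx_ok E -> red e1 e2 -> step (plug E e1) (plug E e2)
| step_blame : forall E l, ectx_ok E -> E <> EHole ->
    step (plug E (tblame l)) (tblame l).

End Syntax.

(* A term splits in at most one way as E[s] with s a redex or a blame: an
   evaluation context only descends into a position all of whose left
   neighbours are values, every subterm of a redex sitting at such a position
   is itself a value, and a term E[s] with s a redex is never a value.  Since
   the reduction rules have pairwise disjoint left-hand sides (the two casts
   out of and into a refinement are separated by the side condition of the
   latter), the step relation is deterministic. *)
From Stdlib Require Import List.

Section Determinism.
Variable S : signature.

(* Blame is counted as a redex: it is what the blame rule of [step] finds in the hole. *)
Definition redex (t : tm S) : Prop :=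
  (exists t', red t t') \/ (exists l, t = tblame S l).

Lemma redex_not_value (t : tm S) : redex t -> ~ value t.
Proof.
  intros [[t' Hred] | [l ->]]; [inversion Hred | ]; simpl; auto.
Qed.

Lemma plug_redex_not_value (E : ectx S) (s : tm S) :
  redex s -> ~ value (plug E s).
Proof.
  intros Hs; destruct E; simpl; auto.
  now apply redex_not_value.
Qed.

Lemma value_map_tconst (ks : list (const S)) : Forall (@value S) (map (tconst S) ks).
Proof.
  apply Forall_map, Forall_forall; simpl; auto.
Qed.

Lemma map_tconst_inj (ks ks' : list (const S)) :
  map (tconst S) ks = map (tconst S) ks' -> ks = ks'.
Proof.
  revert ks'; induction ks as [|k ks IH]; intros [|k' ks'] Heq;
    simpl in Heq; try discriminate; [reflexivity|].
  injection Heq as -> Heq; f_equal; auto.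
Qed.

Lemma red_plug_hole (E : ectx S) (s u : tm S) :
  redex s -> red (plug E s) u -> E = EHole S.
Proof.
  intros Hs Hred; destruct E as [|o vs E es|E e|v E|E T|T e E l|T e E v l];
    [reflexivity| ..]; exfalso; apply (plug_redex_not_value E s Hs);
    inversion Hred; subst; try exact I; try assumption.
  match goal with Hks : map _ _ = vs ++ _ :: es |- _ =>
    apply (Forall_elt _ vs es); rewrite <- Hks; apply value_map_tconst end.
Qed.

Lemma redex_plug_hole (E : ectx S) (s : tm S) :
  redex s -> redex (plug E s) -> E = EHole S.
Proof.
  intros Hs [[u Hred] | [l Hblame]].
  - exact (red_plug_hole E s u Hs Hred).
  - destruct E; simpl in Hblame; congruence.
Qed.

Lemma values_app_cons_inj (vs vs' es es' : list (tm S)) (x x' : tm S) :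
  Forall (@value S) vs -> Forall (@value S) vs' -> ~ value x -> ~ value x' ->
  vs ++ x :: es = vs' ++ x' :: es' -> vs = vs' /\ x = x' /\ es = es'.
Proof.
  revert vs'; induction vs as [|v vs IH]; intros [|v' vs'] Hvs Hvs' Hx Hx' Heq;
    simpl in Heq; injection Heq as <- Heq.
  - subst; auto.
  - now inversion Hvs'.
  - now inversion Hvs.
  - inversion Hvs as [|? ? _ Hvs_tl]; inversion Hvs' as [|? ? _ Hvs'_tl].
    destruct (IH vs' Hvs_tl Hvs'_tl Hx Hx' Heq) as (-> & -> & ->); auto.
Qed.

Lemma plug_redex_inj (E E' : ectx S) (s s' : tm S) :
  ectx_ok E -> ectx_ok E' -> redex s -> redex s' ->
  plug E s = plug E' s' -> E = E' /\ s = s'.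
Proof.
  revert E'; induction E as [|o vs E IH es|E IH e|v E IH|E IH T|T e E IH l|T e E IH v l];
    intros E' HE HE' Hs Hs' Heq.
  { simpl in Heq; subst s.
    now rewrite (redex_plug_hole E' s' Hs' Hs). }
  all: destruct E' as [|o' vs' E' es'|E' e'|v' E'|E' T'|T' e' E' l'|T' e' E' v' l'];
    [ match type of Heq with plug ?F _ = _ =>
        assert (F = EHole S) by (apply (redex_plug_hole F s Hs); now rewrite Heq)
      end; discriminate | ..];
    simpl in Heq, HE, HE'; try discriminate; injection Heq; intros; subst.
  all: pose proof (plug_redex_not_value E s Hs) as HEs.
  all: pose proof (plug_redex_not_value E' s' Hs') as HEs'.
  all: try (exfalso; tauto).
  2-6: destruct (IH E') as [-> ->]; tauto.
  destruct HE as [Hvs HE], HE' as [Hvs' HE'].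
  match goal with Hargs : vs ++ _ = vs' ++ _ |- _ =>
    destruct (values_app_cons_inj _ _ _ _ _ _ Hvs Hvs' HEs HEs' Hargs) as (-> & Hplug & ->)
  end.
  destruct (IH E' HE HE' Hs Hs' Hplug) as [-> ->]; auto.
Qed.

Lemma red_deterministic (t u u' : tm S) : red t u -> red t u' -> u = u'.
Proof.
  intros Hred Hred'; inversion Hred; subst; inversion Hred'; subst;
    simpl in *; try congruence; try contradiction.
  2-3: destruct (ctrue_cfalse S); congruence.
  match goal with Hks : map _ _ = map _ _ |- _ => apply map_tconst_inj in Hks end.
  congruence.
Qed.

Lemma blame_irreducible (l : label S) (u : tm S) : ~ red (tblame S l) u.
Proof. inversion 1. Qed.

Lemma step_deterministic (e e1 e2 : tm S) : step e e1 -> step e e2 -> e1 = e2.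
Proof.
  intros Hstep1 Hstep2.
  destruct Hstep1 as [E s s' HE Hs | E l HE _];
    inversion Hstep2 as [E' t t' HE' Ht Heq | E' l' HE' _ Heq]; subst;
    match type of Heq with plug _ ?a = plug _ ?b =>
      destruct (plug_redex_inj E' E a b HE' HE) as [Hctx Hfocus]
    end; try solve [exact Heq | left; eauto | right; eauto]; subst.
  - f_equal; eapply red_deterministic; eassumption.
  - now apply blame_irreducible in Hs.
  - now apply blame_irreducible in Ht.
  - congruence.
Qed.

End Determinism.

Theorem mainTheorem2 (S : signature) (e e1 e2 : tm S) :
  wf_tm e -> step e e1 -> step e e2 -> e1 = e2.
Proof.
  intros _; apply step_deterministic.
Qed.
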